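(* Let $A\in\mathbb{R}^{n\times n}$ be Hurwitz, $B\in\mathbb{R}^{n\times m}$, $C\in\mathbb{R}^{m\times n}$, $D\in\mathbb{R}^{m\times m}$ with $\|D\|<1$, and consider the system $\Sigma:\ \dot{\mathbf{x}}(t)=A\mathbf{x}(t)+B\,\Phi\circ(I-D\Phi)^{-1}(C\mathbf{x}(t))$. Then the equilibrium $x=0$ of $\Sigma$ is globally asymptotically stable if and only if it is locally asymptotically stable.
   Context: $\|D\|$ is the spectral norm. $\Phi:\mathbb{R}^m\to\mathbb{R}^m$ is the componentwise ReLU, $\Phi(q)_i=\max(q_i,0)$. For $\|D\|<1$ the map $q\mapsto q-D\Phi(q)$ is a bijection of $\mathbb{R}^m$, and $(I-D\Phi)^{-1}$ denotes its inverse; $\Sigma$ is the closed loop of $\dot{\mathbf{x}}=A\mathbf{x}+B\mathbf{w}$, $\mathbf{z}=C\mathbf{x}+D\mathbf{w}$, $\mathbf{w}=\Phi(\mathbf{z})$. Stability notions: (i) for each $\varepsilon>0$ there is $\delta>0$ with $\|\mathbf{x}(0)\|<\delta\Rightarrow\|\mathbf{x}(t)\|<\varepsilon$ for all $t\geq0$; (ii) there is $\delta>0$ with $\|\mathbf{x}(0)\|<\delta\Rightarrow\lim_{t\to\infty}\mathbf{x}(t)=0$; (iii) $\lim_{t\to\infty}\mathbf{x}(t)=0$ for every initial state $\mathbf{x}(0)$. The origin is locally asymptotically stable if (i) and (ii) hold, and globally asymptotically stable if (i) and (iii) hold. *)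

From HB Require Import structures.
From mathcomp Require Import all_boot all_order all_algebra.
From mathcomp Require Import all_classical all_reals all_analysis.
From mathcomp Require Import complex.
Set Implicit Arguments. Unset Strict Implicit. Unset Printing Implicit Defensive.
Import Order.TTheory GRing.Theory Num.Theory.
Import numFieldNormedType.Exports.
Local Open Scope classical_set_scope.
Local Open Scope ring_scope.

Section Defs.
Variable R : realType.

Definition enorm (k : nat) (v : 'cV[R]_k) : R :=
  Num.sqrt (\sum_(i < k) v i 0 ^+ 2).

Definition spectral_norm (p q : nat) (D : 'M[R]_(p, q)) : R :=
  sup [set enorm (D *m v) | v in [set v : 'cV[R]_q | enorm v <= 1]].

Definition hurwitz (n : nat) (A : 'M[R]_n) : Prop :=
  forall lam : R[i], eigenvalue (map_mx (fun a : R => Complex a 0) A) lam ->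
    complex.Re lam < 0.

Definition Phi (m : nat) (q : 'cV[R]_m) : 'cV[R]_m :=
  map_mx (fun a => Num.max a 0) q.

(* (I - D Phi)^{-1}: the inverse of q |-> q - D Phi(q) (a bijection when ||D||<1) *)
Definition inv_IDPhi (m : nat) (D : 'M[R]_m) (y : 'cV[R]_m) : 'cV[R]_m :=
  get [set q : 'cV[R]_m | q - D *m Phi q = y].

Definition sigma_field (n m : nat) (A : 'M[R]_n) (B : 'M[R]_(n, m))
  (C : 'M[R]_(m, n)) (D : 'M[R]_m) (x : 'cV[R]_n) : 'cV[R]_n :=
  A *m x + B *m Phi (inv_IDPhi D (C *m x)).

Definition is_solution (n m : nat) (A : 'M[R]_n) (B : 'M[R]_(n, m))
  (C : 'M[R]_(m, n)) (D : 'M[R]_m) (x : R -> 'cV[R]_n) : Prop :=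
  {within `[0, +oo[, continuous x} /\
  forall t : R, 0 < t -> is_derive t 1 x (sigma_field A B C D (x t)).

Definition lyap_stable n m A B C D : Prop :=
  forall eps : R, 0 < eps -> exists2 delta : R, 0 < delta &
    forall x, @is_solution n m A B C D x -> enorm (x 0) < delta ->
      forall t : R, 0 <= t -> enorm (x t) < eps.

Definition locally_attractive n m A B C D : Prop :=
  exists2 delta : R, 0 < delta &
    forall x, @is_solution n m A B C D x -> enorm (x 0) < delta ->
      x t @[t --> +oo] --> (0 : 'cV[R]_n).

Definition globally_attractive n m A B C D : Prop :=
  forall x, @is_solution n m A B C D x -> x t @[t --> +oo] --> (0 : 'cV[R]_n).

Definition LAS n m A B C D : Prop :=
  @lyap_stable n m A B C D /\ @locally_attractive n m A B C D.

Definition GAS n m A B C D : Prop :=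
  @lyap_stable n m A B C D /\ @globally_attractive n m A B C D.

End Defs.

(** The closed loop is positively homogeneous: ReLU commutes with positive
    scalings, hence so does the inverse of [q |-> q - D Phi(q)] (which is
    injective since [||D|| < 1] and ReLU is 1-Lipschitz), and so does the
    vector field.  Positive multiples of solutions are therefore solutions,
    and any trajectory can be shrunk into the basin of attraction of the
    origin and blown back up. *)

From HB Require Import structures.
From mathcomp Require Import all_boot all_order all_algebra.
From mathcomp Require Import all_classical all_reals all_analysis.
From mathcomp Require Import complex.
From mathcomp Require Import lra.
Import Order.TTheory GRing.Theory Num.Theory.
Set Implicit Arguments. Unset Strict Implicit. Unset Printing Implicit Defensive.
Local Open Scope ring_scope.

Section ClosedLoopHomogeneity.
Variable R : realType.
Local Open Scope classical_set_scope.

Lemma enorm_ge0 k (v : 'cV[R]_k) : 0 <= enorm v.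
Proof. exact: sqrtr_ge0. Qed.

Lemma enorm0 k : enorm (0 : 'cV[R]_k) = 0.
Proof. by rewrite /enorm big1 ?sqrtr0 // => i _; rewrite mxE expr0n. Qed.

Lemma enorm_eq0 k (v : 'cV[R]_k) : enorm v = 0 -> v = 0.
Proof.
rewrite /enorm => /eqP; rewrite sqrtr_eq0 => sum_le0.
have sum_eq0 : \sum_(i < k) v i 0 ^+ 2 = 0.
  by apply/eqP; rewrite eq_le sum_le0 sumr_ge0 // => j _; rewrite sqr_ge0.
apply/matrixP => i j; rewrite (ord1 j) mxE.
move/psumr_eq0P: sum_eq0 => /(_ (fun j _ => sqr_ge0 (v j 0)) i isT).
by move/eqP; rewrite sqrf_eq0 => /eqP.
Qed.

Lemma enormZ k (c : R) (v : 'cV[R]_k) : enorm (c *: v) = `|c| * enorm v.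
Proof.
rewrite /enorm -sqrtr_sqr -sqrtrM ?sqr_ge0 //; congr Num.sqrt.
by rewrite mulr_sumr; apply: eq_bigr => i _; rewrite mxE exprMn.
Qed.

Lemma enorm_le k (u v : 'cV[R]_k) :
  (forall i, `|u i 0| <= `|v i 0|) -> enorm u <= enorm v.
Proof.
move=> le_uv; rewrite /enorm ler_sqrt; last by apply: sumr_ge0 => i _; exact: sqr_ge0.
apply: ler_sum => i _.
rewrite -[u i 0 ^+ 2]real_normK ?num_real // -[v i 0 ^+ 2]real_normK ?num_real //.
by rewrite ler_sqr ?nnegrE ?le_uv.
Qed.

Lemma enorm_coord_le k (v : 'cV[R]_k) i : `|v i 0| <= enorm v.
Proof.
rewrite -sqrtr_sqr /enorm ler_sqrt; last by apply: sumr_ge0 => j _; exact: sqr_ge0.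
by rewrite (bigD1 i) //= lerDl sumr_ge0 // => j _; rewrite sqr_ge0.
Qed.

Lemma max0_lipschitz (a b : R) : `|Num.max a 0 - Num.max b 0| <= `|a - b|.
Proof.
case: (lerP 0 (a - b)) => hab; rewrite ?(ger0_norm hab) ?(ltr0_norm hab);
  rewrite /Num.max; do 2 case: ifPn => ?; rewrite ler_norml; apply/andP; split; lra.
Qed.

Lemma Phi_lipschitz k (q q' : 'cV[R]_k) : enorm (Phi q - Phi q') <= enorm (q - q').
Proof. by apply: enorm_le => i; rewrite !mxE max0_lipschitz. Qed.

Lemma PhiZ k (c : R) (q : 'cV[R]_k) : 0 <= c -> Phi (c *: q) = c *: Phi q.
Proof. by move=> c_ge0; apply/matrixP => i j; rewrite !mxE maxr_pMr // mulr0. Qed.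

Lemma spectral_norm_has_sup p q (D : 'M[R]_(p, q)) :
  has_sup [set enorm (D *m v) | v in [set v : 'cV[R]_q | enorm v <= 1]].
Proof.
split; first by exists (enorm (D *m 0)), 0; rewrite //= enorm0 ler01.
exists (enorm (\col_i \sum_j `|D i j|)) => _ [v /= v_le1 <-].
apply: enorm_le => i; rewrite !mxE [leRHS]ger0_norm ?sumr_ge0 //.
apply: le_trans (ler_norm_sum _ _ _) _; apply: ler_sum => j _.
rewrite normrM -[leRHS]mulr1 ler_wpM2l //.
exact: le_trans (enorm_coord_le v j) v_le1.
Qed.

Lemma spectral_norm_ge0 p q (D : 'M[R]_(p, q)) : 0 <= spectral_norm D.
Proof.
rewrite -(@enorm0 p) -(mulmx0 _ D).
by apply: sup_upper_bound (spectral_norm_has_sup D) _ _; exists 0; rewrite //= enorm0.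
Qed.

Lemma enorm_mulmx_le p q (D : 'M[R]_(p, q)) v :
  enorm (D *m v) <= spectral_norm D * enorm v.
Proof.
have [->|v_neq0] := eqVneq v 0; first by rewrite mulmx0 !enorm0 mulr0.
have v_gt0 : 0 < enorm v.
  by rewrite lt_def enorm_ge0 andbT; apply: contra_neq v_neq0; apply: enorm_eq0.
set u := (enorm v)^-1 *: v.
have u_unit : enorm u = 1.
  by rewrite enormZ ger0_norm ?invr_ge0 ?enorm_ge0 // mulVf // gt_eqF.
have := sup_upper_bound (spectral_norm_has_sup D) (x := enorm (D *m u)).
move=> /(_ _)/wrap[]; first by exists u; rewrite //= u_unit.
rewrite /u -scalemxAr enormZ ger0_norm ?invr_ge0 ?enorm_ge0 //.
by rewrite ler_pdivrMl // mulrC.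
Qed.

Lemma IDPhi_inj m (D : 'M[R]_m) : spectral_norm D < 1 ->
  injective (fun q : 'cV[R]_m => q - D *m Phi q).
Proof.
move=> D_lt1 q q' /= eq_q.
have diff_eq : q - q' = D *m (Phi q - Phi q').
  by rewrite mulmxBr; apply/eqP; rewrite subr_eq -addrA addrC -subr_eq eq_q addrC.
have contraction : enorm (q - q') <= spectral_norm D * enorm (q - q').
  rewrite {1}diff_eq; apply: le_trans (enorm_mulmx_le _ _) _.
  by rewrite ler_wpM2l ?spectral_norm_ge0 ?Phi_lipschitz.
have : enorm (q - q') = 0.
  by apply/eqP; rewrite eq_le enorm_ge0 andbT; have := enorm_ge0 (q - q'); nra.
by move/enorm_eq0/eqP; rewrite subr_eq0 => /eqP.
Qed.

Lemma IDPhiZ m (D : 'M[R]_m) (c : R) q : 0 <= c ->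
  c *: q - D *m Phi (c *: q) = c *: (q - D *m Phi q).
Proof. by move=> c_ge0; rewrite PhiZ // -scalemxAr scalerBr. Qed.

Lemma inv_IDPhiZ m (D : 'M[R]_m) (c : R) y : spectral_norm D < 1 -> 0 < c ->
  inv_IDPhi D (c *: y) = c *: inv_IDPhi D y.
Proof.
move=> D_lt1 c_gt0; have c_ge0 := ltW c_gt0.
have [[q0 q0_sol]|no_sol] := pselect (exists q, q - D *m Phi q = y).
  have inv_sol : inv_IDPhi D y - D *m Phi (inv_IDPhi D y) = y.
    by apply: (@xgetPex _ _ [set q | q - D *m Phi q = y]); exists q0.
  apply: xget_unique => [|q /= q_sol]; first by rewrite /= IDPhiZ // inv_sol.
  by apply: (IDPhi_inj D_lt1); rewrite /= q_sol IDPhiZ // inv_sol.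
(* Then [c y] has no preimage either, and both sides are [get]'s default [0]. *)
have no_solZ q : ~ (q - D *m Phi q = c *: y).
  move=> q_sol; apply: no_sol; exists (c^-1 *: q).
  by rewrite IDPhiZ ?invr_ge0 // q_sol scalerA mulVf ?scale1r ?gt_eqF.
have no_sol' q : ~ (q - D *m Phi q = y) by move=> q_sol; apply: no_sol; exists q.
rewrite /inv_IDPhi (xgetPN _ no_solZ) (xgetPN _ no_sol').
by apply/matrixP => i j; rewrite !mxE mulr0.
Qed.

Lemma sigma_fieldZ n m (A : 'M[R]_n) B C (D : 'M[R]_m) (c : R) x :
  spectral_norm D < 1 -> 0 < c ->
  sigma_field A B C D (c *: x) = c *: sigma_field A B C D x.
Proof.
move=> D_lt1 c_gt0; rewrite /sigma_field -!scalemxAr inv_IDPhiZ // PhiZ ?ltW //.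
by rewrite -scalemxAr scalerDr.
Qed.

Lemma is_solutionZ n m (A : 'M[R]_n) B C (D : 'M[R]_m) (c : R) x :
  spectral_norm D < 1 -> 0 < c -> is_solution A B C D x ->
  is_solution A B C D (fun t => c *: x t).
Proof.
move=> D_lt1 c_gt0 [x_cont x_deriv]; split=> [t|t t_gt0].
  exact: continuousZr (x_cont t).
by rewrite sigma_fieldZ //; exact: is_deriveZ (x_deriv t t_gt0).
Qed.

Lemma locally_attractive_globally n m (A : 'M[R]_n) B C (D : 'M[R]_m) :
  spectral_norm D < 1 ->
  locally_attractive A B C D -> globally_attractive A B C D.
Proof.
move=> D_lt1 [d d_gt0 attract] x x_sol.
have e_ge0 := enorm_ge0 (x 0).
set c := d / (2 * (enorm (x 0) + 1)).
have c_gt0 : 0 < c by rewrite divr_gt0 //; lra.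
have shrunk : enorm (c *: x 0) < d.
  have c_scale : c * (2 * (enorm (x 0) + 1)) = d by rewrite mulfVK // gt_eqF //; lra.
  by rewrite enormZ gtr0_norm //; nra.
have unscale : x = c^-1 \*: (fun t => c *: x t).
  by apply/funext => t; rewrite /= scalerA mulVf ?scale1r ?gt_eqF.
rewrite unscale -(scaler0 _ c^-1); apply: cvgZr.
exact: attract _ (is_solutionZ D_lt1 c_gt0 x_sol) shrunk.
Qed.

End ClosedLoopHomogeneity.

Theorem theorem1 (R : realType) (n m : nat) (A : 'M[R]_n) (B : 'M[R]_(n, m))
  (C : 'M[R]_(m, n)) (D : 'M[R]_m) :
  hurwitz A -> spectral_norm D < 1 ->
  (GAS A B C D <-> LAS A B C D).
Proof.
move=> _ D_lt1; split=> [[stable attract]|[stable attract]].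
  by split=> //; exists 1 => // x x_sol _; exact: attract.
by split=> //; exact: locally_attractive_globally.
Qed.
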